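(* Let $N=3$, $p>5$, $\lambda>0$ and $b>0$. If the problem \[ u''+\frac{2}{r}u'+\lambda u+u^p=0,\ r\in(0,b),\qquad u'(0)=u(b)=0, \] has a positive solution, then \[ \frac{1}{\sqrt{\lambda}}\left(\frac{2\sqrt{2(p-5)}}{p+3}+\arccos\left(-\sqrt{\frac{p-5}{p+3}}\right)\right)<b<\frac{\pi}{\sqrt{\lambda}}, \] equivalently \[ \frac{1}{\pi^2}\left(\frac{2\sqrt{2(p-5)}}{p+3}+\arccos\left(-\sqrt{\frac{p-5}{p+3}}\right)\right)^2\lambda_1(B(b))<\lambda<\lambda_1(B(b)), \] where $\lambda_1(B(b))=\pi^2/b^2$.
   Context: $\lambda_1(B(b))$ is the first Dirichlet eigenvalue of $-\Delta$ on the ball of radius $b$ in $\mathbb{R}^3$. A positive solution is one positive on $[0,b)$. *)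

From Stdlib Require Import Reals.
From Coquelicot Require Import Coquelicot.
Open Scope R_scope.

(* Classical positive solution of
     u'' + (2/r) u' + lambda u + u^p = 0 on (0,b),  u'(0) = 0,  u(b) = 0,
   positive on [0,b).  u is a function R -> R of which only the values on
   [0,b] matter; u1, u2 are its first and second derivatives on (0,b).
   u'(0)=0 is the one-sided (right) derivative at 0; u is continuous at b
   from the left with u(b)=0.  u^p (p real) is Rpower, legitimate as u>0. *)
Definition positive_radial_solution (p lambda b : R) (u : R -> R) : Prop :=
  exists u1 u2 : R -> R,
    (forall r, 0 < r < b -> is_derive u r (u1 r)) /\
    (forall r, 0 < r < b -> is_derive u1 r (u2 r)) /\
    (forall r, 0 < r < b ->
        u2 r + (2 / r) * u1 r + lambda * u r + Rpower (u r) p = 0) /\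
    filterlim (fun h => (u h - u 0) / h) (at_right 0) (locally 0) /\
    u b = 0 /\
    filterlim u (at_left b) (locally 0) /\
    (forall r, 0 <= r < b -> 0 < u r).

Definition lambda1_ball3 (b : R) : R := PI ^ 2 / b ^ 2.

Definition lower_const (p : R) : R :=
  2 * sqrt (2 * (p - 5)) / (p + 3) + acos (- sqrt ((p - 5) / (p + 3))).

(* With z = r u the problem becomes z'' + lambda z + r u^p = 0 with z(0) = z(b) = 0 and z > 0;
   write w = sqrt lambda.

   Upper bound (Sturm comparison): the Wronskian W of z and sin (w r) satisfies
   W' = - r u^p sin (w r), so W decreases from W(0+) = 0 as long as w r <= PI.  If w b >= PI,
   then either PI / w < b and W (PI / w) = PI u (PI / w) > 0, or PI / w = b and W(r) -> 0 as
   r -> b; both contradict the strict decrease.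

   Lower bound (Pohozaev): let k = (p - 5) / (p + 3) and
   sigma k = asin (sqrt k) + sqrt (k (1 - k)).  For 0 <= s <= sigma k, the energy identity for z
   tested against the weight sin (2 w r - s) + sin s gives a functional J whose derivative is a
   negative multiple of h (2 w r - s), where h x = (1 + k) (sin x + sin s) - (x + s) cos x is
   nonnegative on [-s, PI + s) and positive on (0, PI + s).  If w b <= PI / 2 + sigma k, then J
   decreases strictly from J(0+) = 0 while J(r) >= - o(1) as r -> b.  Finally
   lower_const p = PI / 2 + sigma k and lambda1_ball3 b = PI^2 / b^2. *)

From Stdlib Require Import Reals Lra.
From Coquelicot Require Import Coquelicot.
Open Scope R_scope.

Lemma MVT_closed (f f' : R -> R) a c : a < c ->
  (forall x, a <= x <= c -> is_derive f x (f' x)) ->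
  exists d, a <= d <= c /\ f c - f a = f' d * (c - a).
Proof.
  intros Hac Hf.
  destruct (MVT_gen f a c f') as [d [Hd Hfd]];
    rewrite ?Rmin_left, ?Rmax_right in * by lra.
  - intros x Hx; apply Hf; lra.
  - intros x Hx; apply continuity_pt_filterlim, (ex_derive_continuous (V := R_NormedModule)).
    exists (f' x); apply Hf; lra.
  - now exists d.
Qed.

Lemma derive_nonpos_le (f f' : R -> R) a c : a <= c ->
  (forall x, a <= x <= c -> is_derive f x (f' x)) ->
  (forall x, a <= x <= c -> f' x <= 0) -> f c <= f a.
Proof.
  intros Hac Hf Hf'. destruct (Req_dec a c) as [<-|Hne]; [lra|].
  destruct (MVT_closed f f' a c) as [d [Hd Hfd]]; [lra|exact Hf|].
  specialize (Hf' d Hd). nra.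
Qed.

Lemma derive_neg_lt (f f' : R -> R) a c : a < c ->
  (forall x, a <= x <= c -> is_derive f x (f' x)) ->
  (forall x, a <= x <= c -> f' x < 0) -> f c < f a.
Proof.
  intros Hac Hf Hf'.
  destruct (MVT_closed f f' a c) as [d [Hd Hfd]]; [lra|exact Hf|].
  specialize (Hf' d Hd). nra.
Qed.

Lemma Rabs_sin_sub_le x y : Rabs (sin y - sin x) <= Rabs (y - x).
Proof.
  rewrite <- (Rmult_1_l (Rabs (y - x))).
  apply (bounded_variation sin cos). intros t _. split.
  - apply is_derive_sin.
  - apply Rabs_le, COS_bound.
Qed.

Lemma sin_le_id t : 0 <= t -> sin t <= t.
Proof.
  intros Ht. pose proof (Rabs_sin_sub_le 0 t) as H.
  rewrite sin_0, !Rminus_0_r, (Rabs_pos_eq t) in H by lra.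
  pose proof (Rle_abs (sin t)). lra.
Qed.

Lemma nonpos_of_derive_nonpos (G G' : R -> R) c K : 0 < c ->
  (forall x, 0 < x <= c -> is_derive G x (G' x)) ->
  (forall x, 0 < x <= c -> G' x <= 0) ->
  (forall d, 0 < d < c -> exists t, 0 < t < d /\ G t <= K * t) ->
  G c <= 0.
Proof.
  intros Hc HG HG' Hnear. apply Rnot_lt_le. intros Hpos.
  set (d := Rmin (c / 2) (G c / (Rabs K + 1))).
  assert (HK : 0 < Rabs K + 1) by (pose proof (Rabs_pos K); lra).
  assert (Hdc : d <= c / 2) by apply Rmin_l.
  assert (HdG : d <= G c / (Rabs K + 1)) by apply Rmin_r.
  assert (Hd : 0 < d < c).
  { split; [apply Rmin_glb_lt; [lra | apply Rdiv_lt_0_compat; lra] | lra]. }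
  destruct (Hnear d Hd) as [t [Ht HGt]].
  assert (HGct : G c <= G t).
  { apply (derive_nonpos_le G G'); [lra | |]; intros x Hx; [apply HG | apply HG']; lra. }
  assert (Htd : (Rabs K + 1) * t < G c).
  { apply Rlt_le_trans with ((Rabs K + 1) * d); [nra|].
    apply (Rmult_le_compat_l (Rabs K + 1)) in HdG; [|lra].
    replace ((Rabs K + 1) * (G c / (Rabs K + 1))) with (G c) in HdG by (field; lra).
    exact HdG. }
  pose proof (Rle_abs K). nra.
Qed.

Lemma no_strict_decrease_between_null_ends (G G' : R -> R) a1 a2 c K : 0 < a1 < a2 -> a2 < c ->
  (forall x, 0 < x < c -> is_derive G x (G' x)) ->
  (forall x, 0 < x < c -> G' x <= 0) ->
  (forall x, a1 <= x <= a2 -> G' x < 0) ->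
  (forall d, 0 < d < c -> exists t, 0 < t < d /\ G t <= K * t) ->
  (forall eps, 0 < eps -> exists r, a2 < r < c /\ - eps < G r) -> False.
Proof.
  intros Ha Hc HG HG' Hneg Hnear Hfar.
  assert (H1 : G a1 <= 0).
  { apply (nonpos_of_derive_nonpos G G' a1 K); [lra | | |].
    - intros x Hx; apply HG; lra.
    - intros x Hx; apply HG'; lra.
    - intros d Hd; apply Hnear; lra. }
  assert (H2 : G a2 < G a1).
  { apply (derive_neg_lt G G'); [lra | |]; intros x Hx; [apply HG; lra | now apply Hneg]. }
  destruct (Hfar (- G a2)) as [r [Hr HGr]]; [lra|].
  assert (G r <= G a2); [|lra].
  apply (derive_nonpos_le G G'); [lra | |]; intros x Hx; [apply HG | apply HG']; lra.
Qed.

Lemma at_right_eps (f : R -> R) a l : filterlim f (at_right a) (locally l) ->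
  forall eps, 0 < eps -> exists d, 0 < d /\ forall x, a < x < a + d -> Rabs (f x - l) < eps.
Proof.
  intros Hf eps Heps. destruct (proj1 (filterlim_locally f l) Hf (mkposreal eps Heps)) as [d Hd].
  exists d. split; [apply cond_pos|]. intros x Hx. apply (Hd x); [|lra].
  apply (Rabs_lt_between' x a d). lra.
Qed.

Lemma at_left_eps (f : R -> R) a l : filterlim f (at_left a) (locally l) ->
  forall eps, 0 < eps -> exists d, 0 < d /\ forall x, a - d < x < a -> Rabs (f x - l) < eps.
Proof.
  intros Hf eps Heps. destruct (proj1 (filterlim_locally f l) Hf (mkposreal eps Heps)) as [d Hd].
  exists d. split; [apply cond_pos|]. intros x Hx. apply (Hd x); [|lra].
  apply (Rabs_lt_between' x a d). lra.
Qed.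

Lemma exists_small_factor K eps : 0 < eps -> exists eta, 0 < eta <= 1 /\ eta * K < eps.
Proof.
  intros Heps. assert (HK : 0 < Rabs K + 1) by (pose proof (Rabs_pos K); lra).
  exists (Rmin 1 (eps / (Rabs K + 1) / 2)).
  assert (H1 : Rmin 1 (eps / (Rabs K + 1) / 2) <= eps / (Rabs K + 1) / 2) by apply Rmin_r.
  split; [split; [apply Rmin_glb_lt; [lra | repeat apply Rdiv_lt_0_compat; lra] | apply Rmin_l]|].
  apply (Rmult_le_compat_l (Rabs K + 1)) in H1; [|lra].
  replace ((Rabs K + 1) * (eps / (Rabs K + 1) / 2)) with (eps / 2) in H1 by (field; lra).
  pose proof (Rle_abs K). assert (0 < Rmin 1 (eps / (Rabs K + 1) / 2)).
  { apply Rmin_glb_lt; [lra | repeat apply Rdiv_lt_0_compat; lra]. }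
  nra.
Qed.

Lemma Rpower_le_1 x p : 0 < x <= 1 -> 0 <= p -> Rpower x p <= 1.
Proof.
  intros Hx Hp. apply Rle_trans with (Rpower 1 p); [apply Rle_Rpower_l; lra|].
  unfold Rpower. rewrite ln_1, Rmult_0_r, exp_0. lra.
Qed.

Lemma x_cos_le_sin z : 0 <= z <= PI / 2 -> z * cos z <= sin z.
Proof.
  intros Hz.
  assert (H : z * cos z - sin z <= 0 * cos 0 - sin 0); [|rewrite sin_0 in H; lra].
  apply (derive_nonpos_le (fun z => z * cos z - sin z) (fun z => - (z * sin z))); [lra| |].
  - intros x _. auto_derive; [exact I | ring].
  - intros x Hx. assert (0 <= sin x) by (apply sin_ge_0; pose proof PI_RGT_0; lra). nra.
Qed.

Lemma sin_mul_sin_sub_le a y : 0 <= a <= PI / 2 -> 0 <= y <= PI / 2 ->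
  sin a * sin (y - a) <= (y - a) * sin y.
Proof.
  intros Ha Hy. pose proof PI_RGT_0.
  assert (0 <= sin a) by (apply sin_ge_0; lra).
  assert (0 <= cos a) by (apply cos_ge_0; lra).
  destruct (Rle_dec a y).
  - assert (sin (y - a) <= y - a) by (apply sin_le_id; lra).
    assert (0 <= sin (y - a)) by (apply sin_ge_0; lra).
    assert (sin a <= sin y) by (apply sin_incr_1; lra).
    nra.
  - replace (y - a) with (- (a - y)) by ring. rewrite sin_neg.
    assert (Hsy : sin y = sin a * cos (a - y) - cos a * sin (a - y))
      by (rewrite <- sin_minus; f_equal; ring).
    assert ((a - y) * cos (a - y) <= sin (a - y)) by (apply x_cos_le_sin; lra).
    assert (0 <= sin (a - y)) by (apply sin_ge_0; lra).
    assert (0 <= (a - y) * cos a * sin (a - y)) by (apply Rmult_le_pos; [apply Rmult_le_pos|]; lra).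
    nra.
Qed.

Definition sigma (k : R) : R := asin (sqrt k) + sqrt k * sqrt (1 - k).

Lemma sigma_sin_cos k : 0 < k < 1 ->
  exists a, 0 <= a <= PI / 2 /\ k = sin a ^ 2 /\ sigma k = a + sin a * cos a.
Proof.
  intros Hk. assert (Hs : 0 < sqrt k < 1).
  { split; [apply sqrt_lt_R0; lra | rewrite <- sqrt_1; apply sqrt_lt_1; lra]. }
  assert (Hsin : sin (asin (sqrt k)) = sqrt k) by (apply sin_asin; lra).
  exists (asin (sqrt k)). split; [|split].
  - pose proof (asin_bound (sqrt k)). split; [|lra].
    apply Rnot_lt_le. intros Hneg. pose proof PI_RGT_0.
    pose proof (sin_lt_0_var (asin (sqrt k))). lra.
  - rewrite Hsin, pow2_sqrt; lra.
  - unfold sigma. rewrite Hsin, cos_asin by lra. unfold Rsqr. rewrite sqrt_sqrt; lra.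
Qed.

Lemma sigma_bounds k : 0 < k < 1 -> 0 <= sigma k <= PI / 2.
Proof.
  intros Hk. destruct (sigma_sin_cos k Hk) as [a [Ha [_ ->]]].
  pose proof PI_RGT_0.
  assert (0 <= sin a <= 1) by (split; [apply sin_ge_0 | apply SIN_bound]; lra).
  assert (0 <= cos a) by (apply cos_ge_0; lra).
  assert (sin (PI / 2 - a) <= PI / 2 - a) by (apply sin_le_id; lra).
  rewrite sin_shift in *. split; nra.
Qed.

Lemma exponent_ratio_bounds p : 5 < p -> 0 < (p - 5) / (p + 3) < 1.
Proof.
  intros Hp. split; [apply Rdiv_lt_0_compat; lra|].
  apply (Rmult_lt_reg_r (p + 3)); [lra|]. field_simplify; lra.
Qed.

Lemma lower_const_sigma p : 5 < p -> lower_const p = PI / 2 + sigma ((p - 5) / (p + 3)).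
Proof.
  intros Hp. pose proof (exponent_ratio_bounds p Hp) as Hk. set (k := (p - 5) / (p + 3)) in *.
  assert (Hs : 0 < sqrt k < 1).
  { split; [apply sqrt_lt_R0; lra | rewrite <- sqrt_1; apply sqrt_lt_1; lra]. }
  unfold lower_const, sigma. fold k.
  rewrite acos_opp, acos_asin by lra.
  assert (sqrt k * sqrt (1 - k) = 2 * sqrt (2 * (p - 5)) / (p + 3)); [|lra].
  rewrite <- sqrt_mult_alt by lra. apply sqrt_lem_1.
  - nra.
  - pose proof (sqrt_pos (2 * (p - 5))).
    apply Rmult_le_pos; [lra | left; apply Rinv_0_lt_compat; lra].
  - replace (2 * sqrt (2 * (p - 5)) / (p + 3) * (2 * sqrt (2 * (p - 5)) / (p + 3)))
      with (4 * (sqrt (2 * (p - 5)) * sqrt (2 * (p - 5))) / (p + 3) ^ 2) by (field; lra).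
    rewrite sqrt_sqrt by lra. unfold k. field. lra.
Qed.

(* With [k = (p - 5) / (p + 3)], the derivative of [pohozaev] is a negative multiple of
   [pohozaev_factor k s (2 w r - s)] (see [pohozaev_derive]). *)
Definition pohozaev_factor (k s x : R) : R := (1 + k) * (sin x + sin s) - (x + s) * cos x.

Lemma pohozaev_factor_derive k s x :
  is_derive (pohozaev_factor k s) x (k * cos x + (x + s) * sin x).
Proof. unfold pohozaev_factor. auto_derive; [exact I | ring]. Qed.

Lemma pohozaev_factor_nonneg_left k s x : 0 < k < 1 -> 0 <= s <= sigma k -> -s <= x <= 0 ->
  0 <= pohozaev_factor k s x.
Proof.
  intros Hk Hs Hx. pose proof (sigma_bounds k Hk). pose proof PI_RGT_0.
  destruct (sigma_sin_cos k Hk) as [a [Ha [Hka Hsig]]].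
  assert (Hstart : pohozaev_factor k s (- s) = 0)
    by (unfold pohozaev_factor; rewrite sin_neg; ring).
  rewrite <- Hstart. apply Ropp_le_cancel.
  apply (derive_nonpos_le (fun x => - pohozaev_factor k s x)
           (fun x => - (k * cos x + (x + s) * sin x))); [lra| |].
  - intros t _. apply (is_derive_opp (pohozaev_factor k s)), pohozaev_factor_derive.
  - intros t Ht. set (y := - t).
    replace t with (- y) by (unfold y; ring). rewrite cos_neg, sin_neg.
    pose proof (sin_mul_sin_sub_le a y Ha ltac:(unfold y; lra)) as Hay.
    rewrite sin_minus in Hay.
    assert (0 <= sin y) by (apply sin_ge_0; unfold y; lra).
    assert ((s - y) * sin y <= (sigma k - y) * sin y) by (apply Rmult_le_compat_r; lra).
    rewrite Hsig, Hka in *. nra.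
Qed.

Lemma pohozaev_factor_pos k s x : 0 < k < 1 -> 0 <= s <= sigma k -> 0 < x < PI + s ->
  0 < pohozaev_factor k s x.
Proof.
  intros Hk Hs Hx. pose proof (sigma_bounds k Hk). pose proof PI_RGT_0.
  destruct (Rle_dec x (PI / 2)).
  - pose proof (pohozaev_factor_nonneg_left k s 0 Hk Hs ltac:(lra)).
    assert (- pohozaev_factor k s x < - pohozaev_factor k s 0); [|lra].
    apply (derive_neg_lt (fun x => - pohozaev_factor k s x)
             (fun x => - (k * cos x + (x + s) * sin x))); [lra| |].
    + intros t _. apply (is_derive_opp (pohozaev_factor k s)), pohozaev_factor_derive.
    + intros t Ht. assert (0 <= sin t) by (apply sin_ge_0; lra).
      destruct (Req_dec t (PI / 2)) as [->|Hne].
      * rewrite sin_PI2, cos_PI2. lra.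
      * assert (0 < cos t) by (apply cos_gt_0; lra). nra.
  - unfold pohozaev_factor.
    assert (cos x <= 0) by (apply cos_le_0; lra).
    assert (sin (- s) < sin (PI - x)) by (apply sin_increasing_1; lra).
    rewrite sin_neg, sin_PI_x in *. nra.
Qed.

Lemma pohozaev_factor_nonneg k s x : 0 < k < 1 -> 0 <= s <= sigma k -> -s <= x < PI + s ->
  0 <= pohozaev_factor k s x.
Proof.
  intros Hk Hs Hx. destruct (Rle_dec x 0).
  - apply pohozaev_factor_nonneg_left; lra.
  - left; apply pohozaev_factor_pos; lra.
Qed.

Lemma sin_add_sin_nonneg s x : 0 <= s <= PI / 2 -> -s <= x <= PI + s -> 0 <= sin x + sin s.
Proof.
  intros Hs Hx. pose proof PI_RGT_0. destruct (Rle_dec x (PI / 2)).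
  - assert (Hsin : sin (- s) <= sin x) by (apply sin_incr_1; lra).
    rewrite sin_neg in Hsin. lra.
  - assert (Hsin : sin (- s) <= sin (PI - x)) by (apply sin_incr_1; lra).
    rewrite sin_neg, sin_PI_x in Hsin. lra.
Qed.

(* The Wronskian z' phi - z phi' of z = r u and phi = sin (w r), with x = u r and y = u' r. *)
Definition sturm (w r x y : R) : R := (x + r * y) * sin (w * r) - w * r * x * cos (w * r).

Lemma Rabs_sturm_le w r x y : 0 <= w -> 0 <= r ->
  Rabs (sturm w r x y) <= (Rabs x + r * Rabs y) * Rabs (sin (w * r)) + w * r * Rabs x.
Proof.
  intros Hw Hr. unfold sturm.
  assert (Hcos : Rabs (cos (w * r)) <= 1) by apply Rabs_le, COS_bound.
  assert (Hxy : Rabs (x + r * y) <= Rabs x + r * Rabs y).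
  { rewrite <- (Rabs_pos_eq r) at 2 by lra. rewrite <- Rabs_mult. apply Rabs_triang. }
  unfold Rminus. eapply Rle_trans; [apply Rabs_triang|].
  rewrite Rabs_Ropp, !Rabs_mult, (Rabs_pos_eq w), (Rabs_pos_eq r) by lra.
  pose proof (Rabs_pos (sin (w * r))). pose proof (Rabs_pos x).
  assert (0 <= w * r) by nra.
  apply Rplus_le_compat; [apply Rmult_le_compat_r; lra|].
  rewrite <- (Rmult_1_r (w * r * Rabs x)) at 2. apply Rmult_le_compat_l; nra.
Qed.

Definition pohozaev_energy (p w r x y : R) : R :=
  (x + r * y) ^ 2 / 2 + w ^ 2 * r ^ 2 * x ^ 2 / 2 + r ^ 2 * x * Rpower x p / (p + 1).

(* The energy identity for z = r u, which solves z'' + w^2 z + r u^p = 0, tested against the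
   weight sin (2 w r - s) + sin s and its derivatives; again x = u r and y = u' r. *)
Definition pohozaev (p w s r x y : R) : R :=
  (sin (2 * w * r - s) + sin s) * pohozaev_energy p w r x y
  - w * r * x * (x + r * y) * cos (2 * w * r - s) - w ^ 2 * r ^ 2 * x ^ 2 * sin (2 * w * r - s).

Lemma pohozaev_energy_nonneg p w r x y : -1 < p -> 0 <= x -> 0 <= pohozaev_energy p w r x y.
Proof.
  intros Hp Hx. unfold pohozaev_energy.
  assert (0 <= r ^ 2 * x * Rpower x p / (p + 1)).
  { apply Rmult_le_pos; [|left; apply Rinv_0_lt_compat; lra].
    pose proof (exp_pos (p * ln x)). unfold Rpower. apply Rmult_le_pos; nra. }
  pose proof (pow2_ge_0 (x + r * y)).
  assert (0 <= w ^ 2 * r ^ 2 * x ^ 2) by (rewrite <- !Rpow_mult_distr; apply pow2_ge_0).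
  lra.
Qed.

Lemma Rabs_pohozaev_sub_le p w s r x y : 0 <= w -> 0 <= r -> 0 <= x ->
  Rabs (pohozaev p w s r x y - (sin (2 * w * r - s) + sin s) * pohozaev_energy p w r x y)
  <= w * r * x * Rabs (x + r * y) + w ^ 2 * r ^ 2 * x ^ 2.
Proof.
  intros Hw Hr Hx. unfold pohozaev.
  set (th := 2 * w * r - s).
  assert (Hcos : Rabs (cos th) <= 1) by apply Rabs_le, COS_bound.
  assert (Hsin : Rabs (sin th) <= 1) by apply Rabs_le, SIN_bound.
  assert (0 <= w * r * x) by (apply Rmult_le_pos; [apply Rmult_le_pos|]; lra).
  assert (0 <= w ^ 2 * r ^ 2 * x ^ 2) by (rewrite <- !Rpow_mult_distr; apply pow2_ge_0).
  replace (_ - _ - _ - _)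
    with (- (w * r * x * (x + r * y) * cos th + w ^ 2 * r ^ 2 * x ^ 2 * sin th)) by ring.
  rewrite Rabs_Ropp. eapply Rle_trans; [apply Rabs_triang|].
  rewrite (Rabs_mult _ (cos th)), (Rabs_mult _ (sin th)), (Rabs_mult (w * r * x)),
    (Rabs_pos_eq (w * r * x)), (Rabs_pos_eq (w ^ 2 * r ^ 2 * x ^ 2)) by lra.
  pose proof (Rabs_pos (x + r * y)). pose proof (Rabs_pos (sin th)). pose proof (Rabs_pos (cos th)).
  apply Rplus_le_compat; [|nra].
  assert (0 <= w * r * x * Rabs (x + r * y)) by nra. nra.
Qed.

Lemma pohozaev_ge p w s r x y : -1 < p -> 0 <= w -> 0 <= r -> 0 <= x ->
  0 <= sin (2 * w * r - s) + sin s ->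
  - (w * r * x * Rabs (x + r * y) + w ^ 2 * r ^ 2 * x ^ 2) <= pohozaev p w s r x y.
Proof.
  intros Hp Hw Hr Hx Hpsi.
  pose proof (Rabs_pohozaev_sub_le p w s r x y Hw Hr Hx) as Hsub.
  apply Rabs_le_between in Hsub.
  pose proof (pohozaev_energy_nonneg p w r x y Hp Hx). nra.
Qed.

Lemma Rabs_sin_sub_add_sin_le x s : Rabs (sin (x - s) + sin s) <= Rabs x.
Proof.
  pose proof (Rabs_sin_sub_le (- s) (x - s)) as H.
  rewrite sin_neg in H. replace (x - s - - s) with x in H by ring.
  replace (sin (x - s) - - sin s) with (sin (x - s) + sin s) in H by ring. exact H.
Qed.

Lemma pohozaev_energy_le p w r x y b U : 0 <= p -> 0 < r <= b -> 0 < x <= U -> Rabs y <= 1 ->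
  pohozaev_energy p w r x y
  <= (U + b) ^ 2 / 2 + w ^ 2 * b ^ 2 * U ^ 2 / 2 + b ^ 2 * U * Rpower U p / (p + 1).
Proof.
  intros Hp Hr Hx Hy. unfold pohozaev_energy.
  assert ((x + r * y) ^ 2 <= (U + b) ^ 2).
  { rewrite <- (pow2_abs (x + r * y)). apply pow_incr. split; [apply Rabs_pos|].
    eapply Rle_trans; [apply Rabs_triang|]. rewrite Rabs_mult, !Rabs_pos_eq by lra. nra. }
  assert (w ^ 2 * r ^ 2 * x ^ 2 <= w ^ 2 * b ^ 2 * U ^ 2).
  { rewrite !Rmult_assoc. apply Rmult_le_compat_l; [apply pow2_ge_0|].
    rewrite <- !Rpow_mult_distr. apply pow_incr. split; [nra | apply Rmult_le_compat; lra]. }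
  assert (Hpow : 0 < Rpower x p <= Rpower U p)
    by (split; [apply exp_pos | apply Rle_Rpower_l; lra]).
  assert (r ^ 2 * x * Rpower x p <= b ^ 2 * U * Rpower U p).
  { apply Rmult_le_compat; [nra | lra | | lra]. apply Rmult_le_compat; nra. }
  assert (r ^ 2 * x * Rpower x p / (p + 1) <= b ^ 2 * U * Rpower U p / (p + 1))
    by (apply Rmult_le_compat_r; [left; apply Rinv_0_lt_compat|]; lra).
  lra.
Qed.

Lemma pohozaev_le_linear p w s b U : 0 <= p -> 0 <= w -> 0 < b -> 0 < U ->
  exists K, forall r x y, 0 < r <= b -> 0 < x <= U -> Rabs y <= 1 ->
    pohozaev p w s r x y <= K * r.
Proof.
  intros Hp Hw Hb HU.
  set (E := (U + b) ^ 2 / 2 + w ^ 2 * b ^ 2 * U ^ 2 / 2 + b ^ 2 * U * Rpower U p / (p + 1)).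
  exists (2 * w * E + w * U * (U + b) + w ^ 2 * b * U ^ 2). intros r x y Hr Hx Hy.
  pose proof (pohozaev_energy_le p w r x y b U Hp Hr Hx Hy) as HE. fold E in HE.
  pose proof (pohozaev_energy_nonneg p w r x y ltac:(lra) ltac:(lra)) as HE0.
  pose proof (Rabs_sin_sub_add_sin_le (2 * w * r) s) as Hpsi.
  rewrite (Rabs_pos_eq (2 * w * r)) in Hpsi by nra.
  pose proof (Rabs_pohozaev_sub_le p w s r x y Hw ltac:(lra) ltac:(lra)) as Hsub.
  apply Rabs_le_between in Hsub.
  assert ((sin (2 * w * r - s) + sin s) * pohozaev_energy p w r x y <= 2 * w * r * E).
  { apply Rle_trans with (Rabs (sin (2 * w * r - s) + sin s) * pohozaev_energy p w r x y).
    - apply Rmult_le_compat_r; [lra | apply Rle_abs].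
    - apply Rmult_le_compat; [apply Rabs_pos | lra | lra | lra]. }
  assert (Hxy : Rabs (x + r * y) <= U + b).
  { eapply Rle_trans; [apply Rabs_triang|]. rewrite Rabs_mult, !Rabs_pos_eq by lra. nra. }
  assert (w * r * x * Rabs (x + r * y) <= r * (w * U * (U + b))).
  { assert (x * Rabs (x + r * y) <= U * (U + b))
      by (apply Rmult_le_compat; try apply Rabs_pos; lra).
    replace (r * (w * U * (U + b))) with (w * r * (U * (U + b))) by ring.
    rewrite Rmult_assoc. apply Rmult_le_compat_l; nra. }
  assert (w ^ 2 * r ^ 2 * x ^ 2 <= r * (w ^ 2 * b * U ^ 2)).
  { replace (r * (w ^ 2 * b * U ^ 2)) with (w ^ 2 * (r * b * U ^ 2)) by ring.
    rewrite Rmult_assoc. apply Rmult_le_compat_l; [apply pow2_ge_0|].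
    apply Rmult_le_compat; [apply pow2_ge_0 | apply pow2_ge_0 | simpl; nra | apply pow_incr; lra]. }
  nra.
Qed.

Section RadialSolution.

Variables (p w b : R) (u u1 u2 : R -> R).
Hypothesis p_pos : 0 < p.
Hypothesis w_pos : 0 < w.
Hypothesis b_pos : 0 < b.
Hypothesis u_derive : forall r, 0 < r < b -> is_derive u r (u1 r).
Hypothesis u1_derive : forall r, 0 < r < b -> is_derive u1 r (u2 r).
Hypothesis u_ode : forall r, 0 < r < b -> u2 r + 2 / r * u1 r + w ^ 2 * u r + Rpower (u r) p = 0.
Hypothesis u_slope_0 : filterlim (fun h => (u h - u 0) / h) (at_right 0) (locally 0).
Hypothesis u_lim_b : filterlim u (at_left b) (locally 0).
Hypothesis u_pos : forall r, 0 <= r < b -> 0 < u r.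

Lemma Derive_u r : 0 < r < b -> Derive (fun t => u t) r = u1 r.
Proof. intros Hr. apply is_derive_unique, u_derive, Hr. Qed.

Lemma Derive_u1 r : 0 < r < b -> Derive (fun t => u1 t) r = u2 r.
Proof. intros Hr. apply is_derive_unique, u1_derive, Hr. Qed.

Lemma flux_derive r : 0 < r < b ->
  is_derive (fun t => t ^ 2 * u1 t) r (- r ^ 2 * (w ^ 2 * u r + Rpower (u r) p)).
Proof.
  intros Hr. specialize (u_ode r Hr).
  auto_derive; [exists (u2 r); now apply u1_derive|].
  rewrite Derive_u1 by exact Hr.
  replace (u2 r) with (- (2 / r) * u1 r - w ^ 2 * u r - Rpower (u r) p) by lra.
  field. lra.
Qed.

(* Only the right difference quotient of u at 0 is controlled, so u1 need not be bounded near 0;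
   the mean value theorem on [h, 2 h] still yields points where it is small. *)
Lemma small_slope_near_0 eps d : 0 < eps -> 0 < d <= b ->
  exists t, 0 < t < d /\ Rabs (u t - u 0) <= eps /\ Rabs (u1 t) <= eps.
Proof.
  intros Heps Hd.
  destruct (at_right_eps _ _ _ u_slope_0 (eps / 3)) as [e [He Hq]]; [lra|].
  assert (Hu0 : forall h, 0 < h < e -> Rabs (u h - u 0) <= eps / 3 * h).
  { intros h Hh. specialize (Hq h ltac:(lra)).
    replace (u h - u 0) with ((u h - u 0) / h * h) by (field; lra).
    rewrite Rabs_mult, (Rabs_pos_eq h), Rminus_0_r in * by lra. nra. }
  set (h := Rmin (Rmin e d) 1 / 3).
  assert (Hh : 0 < h /\ 3 * h <= e /\ 3 * h <= d /\ 3 * h <= 1).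
  { pose proof (Rmin_l (Rmin e d) 1). pose proof (Rmin_r (Rmin e d) 1).
    pose proof (Rmin_l e d). pose proof (Rmin_r e d).
    assert (0 < Rmin (Rmin e d) 1) by (repeat apply Rmin_glb_lt; lra).
    unfold h. lra. }
  destruct (MVT_closed u u1 h (2 * h)) as [t [Ht Hmvt]]; [lra | intros x Hx; apply u_derive; lra |].
  exists t. split; [lra|]. split.
  - eapply Rle_trans; [apply Hu0; lra|]. nra.
  - pose proof (Hu0 h ltac:(lra)). pose proof (Hu0 (2 * h) ltac:(lra)).
    replace (2 * h - h) with h in Hmvt by ring.
    assert (Rabs (u1 t) * h <= eps * h); [|nra].
    rewrite <- (Rabs_pos_eq h) at 1 by lra. rewrite <- Rabs_mult, <- Hmvt.
    replace (u (2 * h) - u h) with ((u (2 * h) - u 0) - (u h - u 0)) by ring.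
    eapply Rle_trans; [apply Rabs_triang|]. rewrite Rabs_Ropp. lra.
Qed.

Lemma flux_lipschitz_near_b : exists d, 0 < d <= b / 2 /\ forall r0 r, b - d <= r0 <= r -> r < b ->
  Rabs (r ^ 2 * u1 r - r0 ^ 2 * u1 r0) <= b ^ 2 * (w ^ 2 + 1) * (r - r0).
Proof.
  destruct (at_left_eps _ _ _ u_lim_b 1 Rlt_0_1) as [e [He Hsmall]].
  exists (Rmin e b / 2).
  assert (Hd : 0 < Rmin e b / 2 <= e / 2 /\ Rmin e b / 2 <= b / 2).
  { pose proof (Rmin_l e b). pose proof (Rmin_r e b).
    assert (0 < Rmin e b) by (apply Rmin_glb_lt; lra). lra. }
  split; [lra|]. intros r0 r Hr0 Hr.
  destruct (Req_dec r0 r) as [<-|Hne]; [rewrite Rminus_diag, Rabs_R0; lra|].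
  destruct (MVT_closed (fun t => t ^ 2 * u1 t)
              (fun t => - t ^ 2 * (w ^ 2 * u t + Rpower (u t) p)) r0 r) as [t [Ht ->]];
    [lra | intros t Ht; apply flux_derive; lra |].
  assert (Hut : 0 < u t <= 1).
  { split; [apply u_pos; lra|].
    specialize (Hsmall t ltac:(lra)). rewrite Rminus_0_r in Hsmall.
    apply Rabs_lt_between in Hsmall. lra. }
  pose proof (Rpower_le_1 (u t) p Hut ltac:(lra)). pose proof (exp_pos (p * ln (u t))).
  assert (0 < w ^ 2) by (apply pow_lt; lra).
  assert (0 <= t ^ 2 <= b ^ 2) by (split; [apply pow2_ge_0 | apply pow_incr; lra]).
  replace (- t ^ 2 * (w ^ 2 * u t + Rpower (u t) p) * (r - r0))
    with (- (t ^ 2 * (w ^ 2 * u t + Rpower (u t) p) * (r - r0))) by ring.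
  unfold Rpower in *.
  rewrite Rabs_Ropp, Rabs_pos_eq by (apply Rmult_le_pos; [apply Rmult_le_pos|]; nra).
  apply Rmult_le_compat_r; [lra|]. apply Rmult_le_compat; nra.
Qed.

Lemma slope_bounded_near_b :
  exists d V, 0 < d <= b / 2 /\ forall r, b - d < r < b -> Rabs (u1 r) <= V.
Proof.
  destruct flux_lipschitz_near_b as [d [Hd Hflux]].
  set (A0 := Rabs ((b - d) ^ 2 * u1 (b - d)) + b ^ 2 * (w ^ 2 + 1) * b).
  exists d, (4 * A0 / b ^ 2). split; [lra|]. intros r Hr.
  specialize (Hflux (b - d) r ltac:(lra) ltac:(lra)).
  assert (Habs : Rabs (r ^ 2 * u1 r) <= A0).
  { pose proof (Rabs_triang_inv (r ^ 2 * u1 r) ((b - d) ^ 2 * u1 (b - d))).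
    assert (0 < w ^ 2) by (apply pow_lt; lra).
    assert (b ^ 2 * (w ^ 2 + 1) * (r - (b - d)) <= b ^ 2 * (w ^ 2 + 1) * b)
      by (apply Rmult_le_compat_l; [apply Rmult_le_pos; [apply pow2_ge_0|] |]; lra).
    unfold A0. lra. }
  rewrite Rabs_mult, (Rabs_pos_eq (r ^ 2)) in Habs by apply pow2_ge_0.
  assert (Hr2 : b ^ 2 / 4 <= r ^ 2) by (simpl; nra).
  assert (Hb2 : 0 < b ^ 2) by (apply pow_lt; lra).
  apply (Rmult_le_reg_l (b ^ 2 / 4)); [lra|].
  replace (b ^ 2 / 4 * (4 * A0 / b ^ 2)) with A0 by (field; lra).
  pose proof (Rabs_pos (u1 r)). nra.
Qed.

Lemma boundary_points : exists V, forall a eta, a < b -> 0 < eta ->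
  exists r, a < r < b /\ b - r < eta /\ u r < eta /\ Rabs (u1 r) <= V.
Proof.
  destruct slope_bounded_near_b as [d [V [Hd HV]]]. exists V. intros a eta Ha Heta.
  destruct (at_left_eps _ _ _ u_lim_b eta Heta) as [e [He Hsmall]].
  set (m := Rmin (Rmin d e) (Rmin (b - a) eta)).
  assert (Hm : 0 < m /\ m <= d /\ m <= e /\ m <= b - a /\ m <= eta).
  { pose proof (Rmin_l (Rmin d e) (Rmin (b - a) eta)).
    pose proof (Rmin_r (Rmin d e) (Rmin (b - a) eta)).
    pose proof (Rmin_l d e). pose proof (Rmin_r d e).
    pose proof (Rmin_l (b - a) eta). pose proof (Rmin_r (b - a) eta).
    assert (0 < m) by (repeat apply Rmin_glb_lt; lra). unfold m in *. lra. }
  exists (b - m / 2). split; [lra|]. split; [lra|]. split.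
  - specialize (Hsmall (b - m / 2) ltac:(lra)). rewrite Rminus_0_r in Hsmall.
    apply Rabs_lt_between in Hsmall. lra.
  - apply HV. lra.
Qed.

Lemma sturm_derive r : 0 < r < b ->
  is_derive (fun t => sturm w t (u t) (u1 t)) r (- r * Rpower (u r) p * sin (w * r)).
Proof.
  intros Hr. specialize (u_ode r Hr). unfold sturm.
  auto_derive;
    [repeat split; first [exists (u1 r); now apply u_derive | exists (u2 r); now apply u1_derive]|].
  rewrite Derive_u, Derive_u1 by exact Hr.
  replace (u2 r) with (- (2 / r) * u1 r - w ^ 2 * u r - Rpower (u r) p) by lra.
  field. lra.
Qed.

Lemma sturm_le_linear_near_0 d : 0 < d <= b ->
  exists t, 0 < t < d /\ sturm w t (u t) (u1 t) <= w * (2 * (u 0 + 1) + b) * t.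
Proof.
  intros Hd. destruct (small_slope_near_0 1 d) as [t [Ht [Hut Hu1t]]]; [lra | lra |].
  exists t. split; [lra|].
  assert (Hu : 0 < u t <= u 0 + 1)
    by (split; [apply u_pos; lra | apply Rabs_le_between in Hut; lra]).
  pose proof (Rabs_sturm_le w t (u t) (u1 t) ltac:(lra) ltac:(lra)) as HW.
  pose proof (Rabs_sin_sub_le 0 (w * t)) as Hsin.
  rewrite sin_0, !Rminus_0_r, (Rabs_pos_eq (w * t)), (Rabs_pos_eq (u t)) in * by nra.
  assert (t * Rabs (u1 t) <= b) by (pose proof (Rabs_pos (u1 t)); nra).
  assert ((u t + t * Rabs (u1 t)) * Rabs (sin (w * t)) <= (u 0 + 1 + b) * (w * t)).
  { apply Rmult_le_compat; [pose proof (Rabs_pos (u1 t)); nra | apply Rabs_pos | lra | lra]. }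
  assert (w * t * u t <= w * t * (u 0 + 1)) by (apply Rmult_le_compat_l; nra).
  pose proof (Rle_abs (sturm w t (u t) (u1 t))). nra.
Qed.

Lemma sturm_ge_near_b : w * b = PI -> forall a eps, 0 <= a < b -> 0 < eps ->
  exists r, a < r < b /\ - eps < sturm w r (u r) (u1 r).
Proof.
  intros Hwb a eps Ha Heps. destruct boundary_points as [V HV].
  destruct (exists_small_factor (w * (1 + b * Rabs V + b)) eps Heps) as [eta [Heta Hsmall]].
  destruct (HV a eta) as [r [Hr [Hbr [Hur Hu1r]]]]; [lra | lra |].
  exists r. split; [lra|].
  assert (Hu : 0 < u r) by (apply u_pos; lra).
  pose proof (Rabs_sturm_le w r (u r) (u1 r) ltac:(lra) ltac:(lra)) as HW.
  pose proof (Rabs_sin_sub_le (w * r) (w * b)) as Hsin.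
  rewrite Hwb, sin_PI, Rminus_0_l, Rabs_Ropp, (Rabs_pos_eq (PI - w * r)) in Hsin by nra.
  rewrite (Rabs_pos_eq (u r)) in HW by lra.
  assert (r * Rabs (u1 r) <= b * Rabs V)
    by (pose proof (Rle_abs V); apply Rmult_le_compat; try apply Rabs_pos; lra).
  assert ((u r + r * Rabs (u1 r)) * Rabs (sin (w * r)) <= (1 + b * Rabs V) * (w * eta)).
  { apply Rmult_le_compat; [pose proof (Rabs_pos (u1 r)); nra | apply Rabs_pos | lra | nra]. }
  assert (w * r * u r <= w * b * eta) by (apply Rmult_le_compat; nra).
  pose proof (Rle_abs (- sturm w r (u r) (u1 r))). rewrite Rabs_Ropp in *. nra.
Qed.

Lemma wb_lt_PI : w * b < PI.
Proof.
  apply Rnot_le_lt. intros Hge. pose proof PI_RGT_0.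
  set (c := PI / w).
  assert (Hwc : w * c = PI) by (unfold c; field; lra).
  assert (Hc : 0 < c <= b).
  { split; [unfold c; apply Rdiv_lt_0_compat; lra|]. apply (Rmult_le_reg_l w); lra. }
  set (W := fun t => sturm w t (u t) (u1 t)).
  set (W' := fun t => - t * Rpower (u t) p * sin (w * t)).
  set (K := w * (2 * (u 0 + 1) + b)).
  assert (HW : forall x, 0 < x < b -> is_derive W x (W' x)) by exact sturm_derive.
  assert (HW' : forall x, 0 < x <= c -> W' x <= 0).
  { intros x Hx. unfold W'. assert (0 <= sin (w * x)) by (apply sin_ge_0; nra).
    pose proof (exp_pos (p * ln (u x))). unfold Rpower.
    assert (0 <= x * exp (p * ln (u x)) * sin (w * x)) by (apply Rmult_le_pos; nra). lra. }
  destruct (Rle_lt_or_eq_dec _ _ (proj2 Hc)) as [Hcb|Hcb].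
  - assert (HWc : W c <= 0).
    { apply (nonpos_of_derive_nonpos W W' c K); [lra | | exact HW' |].
      - intros x Hx; apply HW; lra.
      - intros d Hd; apply sturm_le_linear_near_0; lra. }
    assert (0 < u c) by (apply u_pos; lra).
    unfold W, sturm in HWc. rewrite Hwc, sin_PI, cos_PI in HWc. nra.
  - rewrite Hcb in Hwc.
    apply (no_strict_decrease_between_null_ends W W' (b / 4) (b / 2) b K);
      [lra | lra | exact HW | | | | ].
    + intros x Hx; apply HW'; lra.
    + intros x Hx. unfold W'. assert (0 < sin (w * x)) by (apply sin_gt_0; nra).
      pose proof (exp_pos (p * ln (u x))). unfold Rpower.
      assert (0 < x * exp (p * ln (u x)) * sin (w * x)) by (apply Rmult_lt_0_compat; nra). lra.
    + intros d Hd; apply sturm_le_linear_near_0; lra.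
    + intros eps Heps; apply sturm_ge_near_b; lra.
Qed.

Lemma pohozaev_derive s r : 0 < r < b ->
  is_derive (fun t => pohozaev p w s t (u t) (u1 t)) r
    (- (p + 3) / (2 * (p + 1)) * r * u r * Rpower (u r) p
     * pohozaev_factor ((p - 5) / (p + 3)) s (2 * w * r - s)).
Proof.
  intros Hr. specialize (u_ode r Hr).
  assert (Hu : 0 < u r) by (apply u_pos; lra).
  unfold pohozaev, pohozaev_energy, pohozaev_factor, Rpower in *.
  auto_derive.
  - repeat split;
      first [exact Hu | exists (u1 r); now apply u_derive | exists (u2 r); now apply u1_derive].
  - rewrite Derive_u, Derive_u1 by exact Hr.
    replace (u2 r) with (- (2 / r) * u1 r - w ^ 2 * u r - exp (p * ln (u r))) by lra.
    replace (2 * w * r + - s) with (2 * w * r - s) by ring.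
    field. lra.
Qed.

Lemma pohozaev_le_linear_near_0 s : exists K, forall d, 0 < d <= b ->
  exists t, 0 < t < d /\ pohozaev p w s t (u t) (u1 t) <= K * t.
Proof.
  assert (Hu0 : 0 < u 0) by (apply u_pos; lra).
  destruct (pohozaev_le_linear p w s b (u 0 + 1)) as [K HK]; [lra | lra | lra | lra |].
  exists K. intros d Hd.
  destruct (small_slope_near_0 1 d) as [t [Ht [Hut Hu1t]]]; [lra | lra |].
  exists t. split; [lra|]. apply HK; [lra | | exact Hu1t].
  split; [apply u_pos; lra | apply Rabs_le_between in Hut; lra].
Qed.

Lemma pohozaev_ge_near_b s : 0 <= s <= PI / 2 -> w * b <= PI / 2 + s ->
  forall a eps, 0 <= a < b -> 0 < eps ->
  exists r, a < r < b /\ - eps < pohozaev p w s r (u r) (u1 r).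
Proof.
  intros Hs Hwb a eps Ha Heps. destruct boundary_points as [V HV].
  destruct (exists_small_factor (w * b * (1 + b * Rabs V) + w ^ 2 * b ^ 2) eps Heps)
    as [eta [Heta Hsmall]].
  destruct (HV a eta) as [r [Hr [Hbr [Hur Hu1r]]]]; [lra | lra |].
  exists r. split; [lra|].
  assert (Hu : 0 < u r) by (apply u_pos; lra).
  assert (Hpsi : 0 <= sin (2 * w * r - s) + sin s) by (apply sin_add_sin_nonneg; nra).
  pose proof (pohozaev_ge p w s r (u r) (u1 r) ltac:(lra) ltac:(lra) ltac:(lra) ltac:(lra) Hpsi).
  assert (Hxy : Rabs (u r + r * u1 r) <= 1 + b * Rabs V).
  { eapply Rle_trans; [apply Rabs_triang|].
    rewrite Rabs_mult, (Rabs_pos_eq r), (Rabs_pos_eq (u r)) by lra.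
    pose proof (Rle_abs V).
    assert (r * Rabs (u1 r) <= b * Rabs V) by (apply Rmult_le_compat; try apply Rabs_pos; lra).
    lra. }
  assert (w * r * u r * Rabs (u r + r * u1 r) <= eta * (w * b * (1 + b * Rabs V))).
  { replace (eta * (w * b * (1 + b * Rabs V))) with (w * b * eta * (1 + b * Rabs V)) by ring.
    apply Rmult_le_compat; [| apply Rabs_pos | | exact Hxy].
    - apply Rmult_le_pos; [apply Rmult_le_pos|]; lra.
    - apply Rmult_le_compat; [nra | lra | nra | lra]. }
  assert (w ^ 2 * r ^ 2 * u r ^ 2 <= eta * (w ^ 2 * b ^ 2)).
  { rewrite <- !Rpow_mult_distr.
    replace (eta * (w * b) ^ 2) with ((w * b) ^ 2 * eta) by ring.
    rewrite Rpow_mult_distr. apply Rmult_le_compat; [apply pow2_ge_0 | apply pow2_ge_0 | |].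
    - apply pow_incr. split; [nra | apply Rmult_le_compat_l; lra].
    - simpl. nra. }
  lra.
Qed.

Lemma sigma_lt_wb : 5 < p -> PI / 2 + sigma ((p - 5) / (p + 3)) < w * b.
Proof.
  intros Hp5. pose proof (exponent_ratio_bounds p Hp5) as Hk.
  set (k := (p - 5) / (p + 3)) in *. pose proof (sigma_bounds k Hk). pose proof PI_RGT_0.
  apply Rnot_le_lt. intros Hle.
  (* s <= w b makes 2 w r - s positive on [5 b / 8, 3 b / 4], and w b <= PI / 2 + s keeps it
     below PI + s on (0, b). *)
  set (s := Rmin (sigma k) (w * b)).
  assert (Hs : 0 <= s <= sigma k /\ s <= w * b /\ w * b <= PI / 2 + s).
  { unfold s. destruct (Rle_dec (sigma k) (w * b)).
    - rewrite Rmin_left by lra. repeat split; lra.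
    - rewrite Rmin_right by lra. repeat split; nra. }
  set (J := fun t => pohozaev p w s t (u t) (u1 t)).
  set (J' := fun t => - (p + 3) / (2 * (p + 1)) * t * u t * Rpower (u t) p
                      * pohozaev_factor k s (2 * w * t - s)).
  assert (HJ : forall x, 0 < x < b -> is_derive J x (J' x)) by exact (pohozaev_derive s).
  assert (Hcoef : forall x, 0 < x < b -> - (p + 3) / (2 * (p + 1)) * x * u x * Rpower (u x) p < 0).
  { intros x Hx. assert (0 < u x) by (apply u_pos; lra). pose proof (exp_pos (p * ln (u x))).
    replace (- (p + 3) / (2 * (p + 1)) * x * u x * Rpower (u x) p)
      with (- ((p + 3) / (2 * (p + 1)) * x * u x * Rpower (u x) p)) by (unfold Rdiv; ring).
    unfold Rpower. apply Ropp_lt_gt_0_contravar.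
    repeat first [apply Rmult_lt_0_compat | apply Rinv_0_lt_compat]; lra. }
  destruct (pohozaev_le_linear_near_0 s) as [K HK].
  apply (no_strict_decrease_between_null_ends J J' (5 * b / 8) (3 * b / 4) b K);
    [lra | lra | exact HJ | | | | ].
  - intros x Hx. specialize (Hcoef x Hx). unfold J'.
    assert (0 <= pohozaev_factor k s (2 * w * x - s)); [|nra].
    apply pohozaev_factor_nonneg; [exact Hk | lra |]. nra.
  - intros x Hx. specialize (Hcoef x ltac:(lra)). unfold J'.
    assert (0 < pohozaev_factor k s (2 * w * x - s)); [|nra].
    apply pohozaev_factor_pos; [exact Hk | lra |]. nra.
  - intros d Hd. apply HK. lra.
  - intros eps Heps. apply pohozaev_ge_near_b; lra.
Qed.

End RadialSolution.

Lemma radius_eigenvalue_bounds L lam b : 0 <= L -> 0 < lam -> 0 < b ->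
  L < sqrt lam * b < PI ->
  (L / sqrt lam < b /\ b < PI / sqrt lam) /\
  (L ^ 2 / PI ^ 2 * lambda1_ball3 b < lam /\ lam < lambda1_ball3 b).
Proof.
  intros HL Hlam Hb Hwb. unfold lambda1_ball3. pose proof PI_RGT_0.
  assert (Hw : 0 < sqrt lam) by (apply sqrt_lt_R0; lra).
  rewrite <- (pow2_sqrt lam) at 3 4 by lra.
  set (w := sqrt lam) in *.
  assert (Hb2 : 0 < b ^ 2) by (apply pow_lt; lra).
  split; split.
  - apply (Rmult_lt_reg_r w); [lra|]. field_simplify; lra.
  - apply (Rmult_lt_reg_r w); [lra|]. field_simplify; lra.
  - replace (L ^ 2 / PI ^ 2 * (PI ^ 2 / b ^ 2)) with (L ^ 2 / b ^ 2) by (field; lra).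
    apply (Rmult_lt_reg_r (b ^ 2)); [lra|]. field_simplify; [|lra]. nra.
  - apply (Rmult_lt_reg_r (b ^ 2)); [lra|]. field_simplify; [|lra]. nra.
Qed.

Theorem corollary1p8 (p lambda b : R) :
  5 < p -> 0 < lambda -> 0 < b ->
  (exists u : R -> R, positive_radial_solution p lambda b u) ->
  (lower_const p / sqrt lambda < b /\ b < PI / sqrt lambda) /\
  (lower_const p ^ 2 / PI ^ 2 * lambda1_ball3 b < lambda /\
   lambda < lambda1_ball3 b).
Proof.
  intros Hp Hlam Hb [u [u1 [u2 [Hu [Hu1 [Hode [Hu0 [_ [Hub Hpos]]]]]]]]].
  assert (Hw : 0 < sqrt lambda) by (apply sqrt_lt_R0; lra).
  assert (Hode' : forall r, 0 < r < b ->
    u2 r + 2 / r * u1 r + sqrt lambda ^ 2 * u r + Rpower (u r) p = 0)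
    by (intros r Hr; rewrite pow2_sqrt by lra; auto).
  pose proof (sigma_bounds _ (exponent_ratio_bounds p Hp)). pose proof PI_RGT_0.
  apply radius_eigenvalue_bounds; [rewrite lower_const_sigma; lra | lra | lra | split].
  - rewrite lower_const_sigma by lra.
    apply (sigma_lt_wb p (sqrt lambda) b u u1 u2); auto; lra.
  - apply (wb_lt_PI p (sqrt lambda) b u u1 u2); auto; lra.
Qed.
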